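(* Let $t_0\overset{i_1}{-}t_1\overset{i_2}{-}\cdots\overset{i_k}{-}t_k$ be a path in $\mathbb T_n$ and let $h_1,\dots,h_k$ be integers. Then $$\prod_{j=1}^{k}L_j^{h_j}=\sum\ \prod_{j=1}^{k}\Bigg(\begin{Bmatrix}h_j+\sum_{l=j+1}^{k}\sum_{s=1}^{r_{(l)}}s\,n_s^l\,(\hat{\mathbf c}_l^+,-d_{(j)}\mathbf c_j)_{D_0R}\\ n_0^j,n_1^j,\dots,n_{r_{(j)}}^j\end{Bmatrix}\prod_{s=1}^{r_{(j)}}z_{i_j,s}^{n_s^j}\Bigg)\hat{\mathbf y}^{\sum_{j=1}^{k}\left(\sum_{s=1}^{r_{(j)}}s\,n_s^j\right)\mathbf c_j^+},$$ the sum taken over all tuples of nonnegative integers $(n_0^1,n_1^1,\dots,n_{r_{(1)}}^1;\dots;n_0^k,n_1^k,\dots,n_{r_{(k)}}^k)$ (as an identity of formal power series in $y_1,\dots,y_n$).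
   Context: Notation: $n\ge1$; $[b]_+=\max(b,0)$. For $h\in\mathbb Z$ and $n_0,\dots,n_l\in\mathbb Z_{\ge0}$, $\begin{Bmatrix}h\\ n_0,n_1,\dots,n_l\end{Bmatrix}:=\binom{h}{n_0}\binom{n_0}{n_1,\dots,n_l}$ with $\binom{h}{n_0}=h(h-1)\cdots(h-n_0+1)/n_0!$ and the multinomial coefficient taken to be $0$ if $n_0\ne n_1+\cdots+n_l$. $\mathbb T_n$: $n$-regular tree with edges labeled $1,\dots,n$, distinct labels at each vertex; $t\overset{k}{-}t'$ an edge labeled $k$; $t_0$ root. Positive integers $r_1,\dots,r_n$, $R=\mathrm{diag}(r_i)$. Formal variables $y_1,\dots,y_n$, $z_{i,s}$ ($1\le s\le r_i-1$), $z_{i,s}=z_{i,r_i-s}$, $z_{i,0}=z_{i,r_i}=1$. $B=(b_{ij})$ skew-symmetrizable integer $n\times n$; $\hat y_i=y_i\prod_jx_j^{b_{ji}}$ for variables $x_1,\dots,x_n$, $\hat{\mathbf y}^{\mathbf a}=\prod\hat y_i^{a_i}$. Matrices: $B_{t_0}=B$, $C_{t_0}=I_n$; for $t\overset{k}{-}t'$ ($\varepsilon=\pm1$, independent): $b_{ij;t'}=-b_{ij;t}$ if $i=k$ or $j=k$, else $b_{ij;t}+r_k([-\varepsilon b_{ik;t}]_+b_{kj;t}+b_{ik;t}[\varepsilon b_{kj;t}]_+)$; $c_{ij;t'}=-c_{ij;t}$ if $j=k$, else $c_{ij;t}+r_k(c_{ik;t}[\varepsilon b_{kj;t}]_++[-\varepsilon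 c_{ik;t}]_+b_{kj;t})$. The columns $\mathbf c_{k;t}$ of $C_t$ are sign-coherent (nonzero, entries all $\ge0$ or all $\le0$) with sign $\varepsilon_{k;t}$. Form: $D_0$ positive integer diagonal with $D_0RB$ skew-symmetric, $D_0R=\mathrm{diag}(d_1^{-1},\dots,d_n^{-1})$, $(\mathbf u,\mathbf v)_{D_0R}=\mathbf u^TD_0R\mathbf v$. Path data: $d_{(j)}=d_{i_j}$, $r_{(j)}=r_{i_j}$, $\mathbf c_j=\mathbf c_{i_j;t_{j-1}}$, $\mathbf c_j^+=\varepsilon_{i_j;t_{j-1}}\mathbf c_j$ (a nonzero nonnegative vector), $\hat{\mathbf c}_j^+=B\mathbf c_j^+$. $L_1=\sum_{s=0}^{r_{(1)}}z_{i_1,s}(\hat{\mathbf y}^{\mathbf c_1^+})^s$; for $2\le l\le k$, $L_l=\sum_{s=0}^{r_{(l)}}z_{i_l,s}\big(\hat{\mathbf y}^{\mathbf c_l^+}\prod_{j=1}^{l-1}L_j^{-(\hat{\mathbf c}_l^+,d_{(j)}\mathbf c_j)_{D_0R}}\big)^s$. Each $L_j$ is a formal power series in $y_1,\dots,y_n$ (coefficients Laurent polynomials in $x$ and polynomials in $z$) with constant term $1$, so all powers are defined. *)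

From HB Require Import structures.
From mathcomp Require Import all_boot all_order all_algebra.
Set Implicit Arguments. Unset Strict Implicit. Unset Printing Implicit Defensive.
Import Order.TTheory GRing.Theory Num.Theory.
Local Open Scope ring_scope.

(* A monomial y^m is encoded by its exponent vector m : {ffun 'I_n -> nat}.  *)

Definition mono (n : nat) := {ffun 'I_n -> nat}.
Definition mono0 (n : nat) : mono n := [ffun => 0%N].
Definition mdeg (n : nat) (m : mono n) : nat := (\sum_(a : 'I_n) m a)%N.

Definition fps (A : comUnitRingType) (n : nat) := mono n -> A.

Section FPS.
Variables (A : comUnitRingType) (n : nat).
Implicit Types (f g : fps A n).

Definition fps_zero : fps A n := fun _ => 0.
Definition fps_one : fps A n := fun m => if m == mono0 n then 1 else 0.
Definition fps_add f g : fps A n := fun m => f m + g m.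
Definition fps_opp f : fps A n := fun m => - f m.
Definition fps_scale (c : A) f : fps A n := fun m => c * f m.
(* Cauchy product: (fg)_m = sum_{a <= m} f_a g_{m-a} *)
Definition fps_mul f g : fps A n := fun m =>
  \sum_(a : {dffun forall q : 'I_n, 'I_(m q).+1})
     f [ffun q => nat_of_ord (a q)] * g [ffun q => (m q - a q)%N].
Definition fps_pow f (p : nat) : fps A n := iter p (fps_mul f) fps_one.
(* inverse of a series with constant term 1: f^{-1} = sum_q (1 - f)^q;
   the coefficient of y^m only involves q <= deg m *)
Definition fps_inv f : fps A n := fun m =>
  \sum_(q < (mdeg m).+1) fps_pow (fps_add fps_one (fps_opp f)) q m.
Definition fps_powz f (e : int) : fps A n :=
  match e with
  | Posz p => fps_pow f p
  | Negz q => fps_pow (fps_inv f) q.+1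
  end.

(* S is the sum of the family F (in the usual topology of formal power
   series): every coefficient of S is the finite sum of the corresponding
   coefficients of the F v, all but finitely many of which vanish. *)
Definition fps_hasSum (I : eqType) (F : I -> fps A n) (S : fps A n) : Prop :=
  forall m : mono n, exists s : seq I,
    [/\ uniq s, (forall v, v \notin s -> F v m = 0) & S m = \sum_(v <- s) F v m].
End FPS.

Definition gbinom (h : int) (n0 : nat) : int :=
  divz (\prod_(q < n0) (h - q%:Z)) (n0`!)%:Z.

Definition multinom (n0 : nat) (ns : seq nat) : nat :=
  if n0 == sumn ns then (n0`! %/ \prod_(q <- ns) q`!)%N else 0%N.

Definition bracecoef (h : int) (n0 : nat) (ns : seq nat) : int :=
  gbinom h n0 * (multinom n0 ns)%:Z.

Definition ppart (b : int) : int := if 0 <= b then b else 0.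

(* Mutations of (B, C) (with the choice epsilon = +1, the result being     *)
(* independent of epsilon)                                                  *)
Section Mutation.
Variables (n : nat) (r : 'I_n -> nat).

Definition mutB (k : 'I_n) (B : 'M[int]_n) : 'M[int]_n :=
  \matrix_(a, b)
    if (a == k) || (b == k) then - B a b
    else B a b + (r k)%:Z * (ppart (- B a k) * B k b + B a k * ppart (B k b)).

Definition mutC (k : 'I_n) (B C : 'M[int]_n) : 'M[int]_n :=
  \matrix_(a, b)
    if b == k then - C a b
    else C a b + (r k)%:Z * (C a k * ppart (B k b) + ppart (- C a k) * B k b).

(* (B_{t_j}, C_{t_j}) along the path t_0 -i 1- t_1 -i 2- ... *)
Fixpoint BCpath (B : 'M[int]_n) (i : nat -> 'I_n) (j : nat) : 'M[int]_n * 'M[int]_n :=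
  match j with
  | 0 => (B, 1%:M)
  | j'.+1 => let BC := BCpath B i j' in
             (mutB (i j) BC.1, mutC (i j) BC.1 BC.2)
  end.
End Mutation.

Section PathData.
Variables (A : comUnitRingType) (n : nat) (r : 'I_n -> nat) (B : 'M[int]_n)
  (D0 : 'I_n -> int) (x : 'I_n -> A) (z : 'I_n -> nat -> A) (i : nat -> 'I_n).

(* c_j = c_{i_j ; t_{j-1}}, j >= 1 *)
Definition cvec (j : nat) : 'I_n -> int := fun a => (BCpath r B i j.-1).2 a (i j).
Definition csign (j : nat) : int := if [forall a, 0 <= cvec j a] then 1 else -1.
Definition cplus (j : nat) : 'I_n -> int := fun a => csign j * cvec j a.
Definition cplus_mono (j : nat) : mono n := [ffun a => absz (cplus j a)].
Definition chat (j : nat) : 'I_n -> int := fun a => \sum_(b : 'I_n) B a b * cplus j b.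
(* (\hat c_l^+, d_(j) c_j)_{D_0 R} = d_{i_j} * \hat c_l^+^T D_0 R c_j,
   with d_{i_j}^{-1} = D0_{i_j} r_{i_j}  (this is an integer) *)
Definition pairing (l j : nat) : int :=
  divz (\sum_(a : 'I_n) chat l a * (D0 a * (r a)%:Z) * cvec j a)
       (D0 (i j) * (r (i j))%:Z).

(* \hat y^a = y^a * prod_j x_j^{(B a)_j} *)
Definition yhat (a : mono n) : fps A n := fun m =>
  if m == a then \prod_(q : 'I_n) x q ^ (\sum_(p : 'I_n) B q p * (a p)%:Z) else 0.

Definition Lnext (prev : seq (fps A n)) (j : nat) : fps A n :=
  let Y := fps_mul (yhat (cplus_mono j))
             (\big[(@fps_mul A n)/(@fps_one A n)]_(1 <= l < j)
                 fps_powz (nth (@fps_zero A n) prev l.-1) (- pairing j l)) in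
  \big[(@fps_add A n)/(@fps_zero A n)]_(s < (r (i j)).+1) fps_scale (z (i j) s) (fps_pow Y s).

Fixpoint Lseq (j : nat) : seq (fps A n) :=
  match j with
  | 0 => [::]
  | j'.+1 => rcons (Lseq j') (Lnext (Lseq j') j)
  end.

(* L_j, j >= 1 *)
Definition Lser (j : nat) : fps A n := nth (@fps_zero A n) (Lseq j) j.-1.

Variables (k : nat) (h : nat -> int).
(* a tuple (n^1_0..n^1_{r_(1)}; ...; n^k_0..n^k_{r_(k)}) is encoded as
   nu : seq (seq nat) with nth [::] nu (j-1) = [:: n^j_0; ...; n^j_{r_(j)}] *)
Definition nu_shape (nu : seq (seq nat)) : bool :=
  (size nu == k) && [forall j : 'I_k, size (nth [::] nu j) == (r (i j.+1)).+1].
Definition nuc (nu : seq (seq nat)) (j s : nat) : nat := nth 0%N (nth [::] nu j.-1) s.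
Definition sdeg (nu : seq (seq nat)) (j : nat) : nat :=
  (\sum_(1 <= s < (r (i j)).+1) s * nuc nu j s)%N.

Definition upper (nu : seq (seq nat)) (j : nat) : int :=
  h j + \sum_(j.+1 <= l < k.+1) (sdeg nu l)%:Z * (- pairing l j).

Definition jfactor (nu : seq (seq nat)) (j : nat) : A :=
  (bracecoef (upper nu j) (nuc nu j 0) [seq nuc nu j s | s <- iota 1 (r (i j))])%:~R
  * \prod_(1 <= s < (r (i j)).+1) z (i j) s ^+ nuc nu j s.

Definition rhs_exp (nu : seq (seq nat)) : mono n :=
  [ffun a => (\sum_(1 <= j < k.+1) sdeg nu j * cplus_mono j a)%N].

Definition rhs_term (nu : seq (seq nat)) : fps A n :=
  if nu_shape nu then
    fps_scale (\prod_(1 <= j < k.+1) jfactor nu j) (yhat (rhs_exp nu))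
  else @fps_zero A n.

Definition lhs : fps A n :=
  \big[(@fps_mul A n)/(@fps_one A n)]_(1 <= j < k.+1) fps_powz (Lser j) (h j).
End PathData.

(* Write L_j = 1 + U_j with U_j = \sum_(s >= 1) z_s W_j^s, where
   W_j = \hat y^(c_j^+) \prod_(l < j) L_l^(-(\hat c_j^+, d_(l) c_l)) has no
   constant term. A coefficient of a product of series only involves the
   coefficients at divisors of its monomial, so the identity can be checked
   modulo the monomials not dividing a fixed y^m of degree at most N. There
   (1 + U_j)^h agrees with the truncated binomial series
   \sum_(n_0 <= N) binom(h, n_0) U_j^(n_0), and the multinomial theorem expands
   U_j^(n_0) over the tuples (n_1, ..., n_r) with factor W_j^(\sum_s s n_s).
   That power of W_j contributes \hat y^((\sum_s s n_s) c_j^+) and shifts the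
   exponents of L_1, ..., L_(j-1); expanding the last factor L_k^(h_k) first
   and inducting on k with the shifted exponents h_l gives the formula. The
   remaining terms, with some n^j_s > N, vanish at y^m: either their
   \hat y-degree exceeds N or their multinomial coefficient is zero. *)

From Pilot Require Import Defs.
From HB Require Import structures.
From mathcomp Require Import all_boot all_order all_algebra zify ring.
From mathcomp Require Import boolp.
Import Order.TTheory GRing.Theory Num.Theory.
Set Implicit Arguments. Unset Strict Implicit. Unset Printing Implicit Defensive.
Local Open Scope ring_scope.

Section Monomials.
Variable n : nat.
Implicit Types a b c m : mono n.

Definition madd a b : mono n := [ffun q => (a q + b q)%N].
Definition msub a b : mono n := [ffun q => (a q - b q)%N].
Definition mscale (d : nat) a : mono n := [ffun q => (d * a q)%N].
Definition mle a b : bool := [forall q, (a q <= b q)%N].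

Lemma mleP a b : reflect (forall q, (a q <= b q)%N) (mle a b).
Proof. exact: forallP. Qed.

Lemma mle_refl a : mle a a. Proof. exact/mleP. Qed.

Lemma mle_trans a b c : mle a b -> mle b c -> mle a c.
Proof. by move=> /mleP ab /mleP bc; apply/mleP=> q; apply: leq_trans (ab q) (bc q). Qed.

Lemma mle0m a : mle (mono0 n) a.
Proof. by apply/mleP=> q; rewrite ffunE. Qed.

Lemma mle_subl a b : mle (msub a b) a.
Proof. by apply/mleP=> q; rewrite ffunE leq_subr. Qed.

Lemma mle_addr a b : mle a (madd a b).
Proof. by apply/mleP=> q; rewrite ffunE leq_addr. Qed.

Lemma maddKr a b : msub (madd a b) a = b.
Proof. by apply/ffunP=> q; rewrite !ffunE addKn. Qed.

Lemma msubKr a b : mle a b -> madd a (msub b a) = b.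
Proof. by move/mleP=> ab; apply/ffunP=> q; rewrite !ffunE subnKC. Qed.

Lemma msubK a b : mle a b -> msub b (msub b a) = a.
Proof. by move/mleP=> ab; apply/ffunP=> q; rewrite !ffunE subKn. Qed.

Lemma msub0 a : msub a (mono0 n) = a.
Proof. by apply/ffunP=> q; rewrite !ffunE subn0. Qed.

Lemma msubDA a b c : msub (msub a b) c = msub a (madd b c).
Proof. by apply/ffunP=> q; rewrite !ffunE subnDA. Qed.

Lemma mle_subr a b c : mle a b -> mle (msub a c) (msub b c).
Proof. by move/mleP=> ab; apply/mleP=> q; rewrite !ffunE leq_sub2r. Qed.

Lemma mle_addl_sub a b c : mle a b -> mle c (msub b a) -> mle (madd a c) b.
Proof. by move=> /mleP ab /mleP cba; apply/mleP=> q; move: (cba q); rewrite !ffunE leq_subRL. Qed.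

(* Enumerated as the index set of the Cauchy product [fps_mul]. *)
Local Notation divisor_index m := {dffun forall q : 'I_n, 'I_(m q).+1}.

Definition mdivisors m : seq (mono n) :=
  [seq [ffun q => nat_of_ord (d q)] | d : divisor_index m <- index_enum (divisor_index m)].

Lemma mdivisors_uniq m : uniq (mdivisors m).
Proof.
rewrite map_inj_uniq ?index_enum_uniq // => d d' /ffunP eq_dd'.
by apply/ffunP=> q; apply: val_inj; move: (eq_dd' q); rewrite !ffunE.
Qed.

Lemma mem_mdivisors m b : (b \in mdivisors m) = mle b m.
Proof.
apply/mapP/mleP=> [[a _ ->] q|le_bm]; first by rewrite ffunE -ltnS.
exists ([ffun q => inord (b q)] : divisor_index m); first by rewrite mem_index_enum.
by apply/ffunP=> q; rewrite !ffunE inordK // ltnS.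
Qed.

Section BigDivisors.
Variables (R : Type) (idx : R) (op : Monoid.com_law idx).

Lemma big_mdivisors_rev m (F : mono n -> R) :
  \big[op/idx]_(a <- mdivisors m) F a = \big[op/idx]_(a <- mdivisors m) F (msub m a).
Proof.
rewrite -(big_map (msub m) predT); apply/perm_big/uniq_perm=> [||a].
- exact: mdivisors_uniq.
- rewrite map_inj_in_uniq ?mdivisors_uniq // => a b.
  by rewrite !mem_mdivisors => am bm eq_ab; rewrite -(msubK am) eq_ab msubK.
apply/idP/mapP=> [|[b _ ->]]; last by rewrite mem_mdivisors mle_subl.
by rewrite mem_mdivisors => am; exists (msub m a); rewrite ?mem_mdivisors ?mle_subl ?msubK.
Qed.

(* Both sides sum over the pairs b | a | m, reparametrized by (b, a - b). *)
Lemma big_mdivisors2 m (F : mono n -> mono n -> R) :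
  \big[op/idx]_(a <- mdivisors m) \big[op/idx]_(b <- mdivisors a) F a b =
  \big[op/idx]_(b <- mdivisors m) \big[op/idx]_(c <- mdivisors (msub m b)) F (madd b c) b.
Proof.
rewrite -(@big_allpairs_dep _ _ _ _ (fun=> mono n) _ pair _ _ (fun p => F p.1 p.2)).
rewrite -(@big_allpairs_dep _ _ _ _ (fun=> mono n) _ pair _ _ (fun p => F (madd p.1 p.2) p.1)).
rewrite -(big_map (fun p => (madd p.1 p.2, p.1)) predT (fun p => F p.1 p.2)).
have pairs_uniq (s : seq (mono n)) (t : mono n -> seq (mono n)) :
    uniq s -> (forall a, uniq (t a)) -> uniq [seq (a, b) | a <- s, b <- t a].
  by move=> us ut; apply: allpairs_uniq_dep => // -[a b] [a' b'] _ _ [-> ->].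
apply/perm_big/uniq_perm=> [||[a b]].
- by apply: pairs_uniq => *; exact: mdivisors_uniq.
- rewrite map_inj_in_uniq; first by apply: pairs_uniq => *; exact: mdivisors_uniq.
  move=> _ _ /allpairsPdep[b [c [_ _ ->]]] /allpairsPdep[b' [c' [_ _ ->]]] /= [eq_bc eq_b].
  by subst b'; rewrite -(maddKr b c) eq_bc maddKr.
apply/allpairsPdep/mapP=> [[a' [b' [am ba [-> ->]]]]|].
  move: am ba; rewrite !mem_mdivisors => am ba.
  exists (b', msub a' b'); last by rewrite msubKr.
  apply/allpairsPdep; exists b', (msub a' b'); rewrite !mem_mdivisors mle_subr //.
  by rewrite (mle_trans ba am).
move=> [_ /allpairsPdep[b' [c [bm cmb ->]]] [-> ->]] /=.
move: bm cmb; rewrite !mem_mdivisors => bm cmb; exists (madd b' c), b'.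
by rewrite !mem_mdivisors mle_addr mle_addl_sub.
Qed.

End BigDivisors.

Lemma sum_mdivisors_delta (V : nmodType) m a (F : mono n -> V) :
  \sum_(b <- mdivisors m) (if b == a then F b else 0) = if mle a m then F a else 0.
Proof.
rewrite -big_mkcond /= -mem_mdivisors; case: ifP => am; last first.
  by rewrite big1_seq // => b /andP[/eqP -> bm]; rewrite bm in am.
by rewrite -big_filter filter_pred1_uniq ?mdivisors_uniq // big_seq1.
Qed.

Lemma mdegD a b : mdeg (madd a b) = (mdeg a + mdeg b)%N.
Proof. by rewrite /mdeg -big_split; apply: eq_bigr => q _; rewrite ffunE. Qed.

Lemma mdegB a b : mle b a -> mdeg (msub a b) = (mdeg a - mdeg b)%N.
Proof. by move=> ba; rewrite -{2}(msubKr ba) mdegD addKn. Qed.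

Lemma leq_mdeg a b : mle a b -> (mdeg a <= mdeg b)%N.
Proof. by move/mleP=> ab; apply: leq_sum => q _. Qed.

Lemma mdeg_eq0 a : (mdeg a == 0%N) = (a == mono0 n).
Proof.
rewrite /mdeg sum_nat_eq0; apply/forallP/eqP=> [a0|-> q]; last by rewrite ffunE.
by apply/ffunP=> q; rewrite ffunE; apply/eqP; move: (a0 q).
Qed.

Lemma mdeg0 : mdeg (mono0 n) = 0%N.
Proof. by apply/eqP; rewrite mdeg_eq0. Qed.

Lemma mlem0 a : mle a (mono0 n) = (a == mono0 n).
Proof.
apply/idP/eqP=> [/leq_mdeg|->]; last exact: mle_refl.
by rewrite mdeg0 leqn0 mdeg_eq0 => /eqP.
Qed.

End Monomials.
HB.instance Definition _ A n := Choice.on (fps A n).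

Section FPSRing.
Variables (A : comUnitRingType) (n : nat).
Local Notation F := (fps A n).
Implicit Types (f g u : F) (m : mono n).

Lemma fps_addA : associative (@fps_add A n).
Proof. by move=> f g u; apply: funext => m; apply: addrA. Qed.
Lemma fps_addC : commutative (@fps_add A n).
Proof. by move=> f g; apply: funext => m; apply: addrC. Qed.
Lemma fps_add0 : left_id (@fps_zero A n) (@fps_add A n).
Proof. by move=> f; apply: funext => m; apply: add0r. Qed.
Lemma fps_addN : left_inverse (@fps_zero A n) (@fps_opp A n) (@fps_add A n).
Proof. by move=> f; apply: funext => m; apply: addNr. Qed.

HB.instance Definition _ := GRing.isZmodule.Build F fps_addA fps_addC fps_add0 fps_addN.

Lemma fps_mulE f g m : fps_mul f g m = \sum_(a <- mdivisors m) f a * g (msub m a).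
Proof.
rewrite /fps_mul big_map; apply: eq_bigr => d _; congr (_ * g _).
by apply/ffunP=> q; rewrite !ffunE.
Qed.

Lemma fps_mulC : commutative (@fps_mul A n).
Proof.
move=> f g; apply: funext => m; rewrite !fps_mulE big_mdivisors_rev.
by apply: eq_big_seq => a; rewrite mem_mdivisors => am; rewrite msubK // mulrC.
Qed.

Lemma fps_mul1 : left_id (@fps_one A n) (@fps_mul A n).
Proof.
move=> f; apply: funext => m; rewrite fps_mulE.
rewrite (eq_bigr (fun a => if a == mono0 n then f (msub m a) else 0)).
  by rewrite sum_mdivisors_delta mle0m msub0.
by move=> a _; rewrite /fps_one; case: eqP; rewrite ?mul1r ?mul0r.
Qed.

Lemma fps_mulDl : left_distributive (@fps_mul A n) (@fps_add A n).
Proof.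
move=> f g u; apply: funext => m; rewrite /fps_add !fps_mulE -big_split.
by apply: eq_bigr => a _; rewrite mulrDl.
Qed.

Lemma fps_mulA : associative (@fps_mul A n).
Proof.
move=> f g u; apply: funext => m; rewrite fps_mulE.
under eq_bigr do rewrite fps_mulE mulr_sumr.
rewrite fps_mulE; under [RHS]eq_bigr do rewrite fps_mulE mulr_suml.
rewrite [RHS]big_mdivisors2; apply: eq_bigr => a _; apply: eq_bigr => b _.
by rewrite maddKr msubDA mulrA.
Qed.

End FPSRing.

HB.instance Definition _ A n := GRing.Zmodule_isComPzRing.Build (fps A n)
  (@fps_mulA A n) (@fps_mulC A n) (@fps_mul1 A n) (@fps_mulDl A n).

Section FPSTheory.
Variables (A : comUnitRingType) (n : nat).
Local Notation F := (fps A n).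
Implicit Types (f g u : F) (m : mono n).

Lemma fmulE f g m : (f * g) m = \sum_(a <- mdivisors m) f a * g (msub m a).
Proof. exact: fps_mulE. Qed.
Lemma faddE f g m : (f + g) m = f m + g m. Proof. by []. Qed.
Lemma fsubE f g m : (f - g) m = f m - g m. Proof. by []. Qed.
Lemma foneE m : (1 : F) m = if m == mono0 n then 1 else 0. Proof. by []. Qed.
Lemma fsumE (I : Type) (s : seq I) (P : pred I) (G : I -> F) m :
  (\sum_(i <- s | P i) G i) m = \sum_(i <- s | P i) G i m.
Proof. exact: (big_morph (fun f : F => f m)). Qed.
Lemma fps_bigaddE (I : Type) (s : seq I) (P : pred I) (G : I -> F) :
  \big[@fps_add A n/@fps_zero A n]_(i <- s | P i) G i = \sum_(i <- s | P i) G i.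
Proof. by []. Qed.
Lemma fps_bigmulE (I : Type) (s : seq I) (P : pred I) (G : I -> F) :
  \big[@fps_mul A n/@fps_one A n]_(i <- s | P i) G i = \prod_(i <- s | P i) G i.
Proof. by []. Qed.
Lemma fps_powE f p : fps_pow f p = f ^+ p.
Proof. by elim: p => // p IH; rewrite exprS -IH. Qed.

Lemma fmul_mono0 f g : (f * g) (mono0 n) = f (mono0 n) * g (mono0 n).
Proof.
rewrite fmulE (eq_big_seq (fun a => if a == mono0 n then f a * g (msub (mono0 n) a) else 0)).
  by rewrite sum_mdivisors_delta mle_refl msub0.
by move=> a; rewrite mem_mdivisors mlem0 => /eqP ->; rewrite eqxx.
Qed.

Definition fpsC (c : A) : F := fun m => if m == mono0 n then c else 0.

Lemma fpsCE c f m : (fpsC c * f) m = c * f m.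
Proof.
rewrite fmulE (eq_bigr (fun a => if a == mono0 n then c * f (msub m a) else 0)).
  by rewrite sum_mdivisors_delta mle0m msub0.
by move=> a _; rewrite /fpsC; case: eqP; rewrite ?mul0r.
Qed.

Lemma fps_scaleE c f : fps_scale c f = fpsC c * f.
Proof. by apply: funext => m; rewrite fpsCE. Qed.

Lemma fpsC_is_zmod_morphism : zmod_morphism fpsC.
Proof. by move=> c d; apply: funext => m; rewrite fsubE /fpsC; case: eqP; rewrite ?subr0. Qed.

Lemma fpsC_is_monoid_morphism : monoid_morphism fpsC.
Proof. by split=> // c d; apply: funext => m; rewrite fpsCE /fpsC; case: eqP; rewrite ?mulr0. Qed.

HB.instance Definition _ := GRing.isZmodMorphism.Build A F fpsC fpsC_is_zmod_morphism.
HB.instance Definition _ := GRing.isMonoidMorphism.Build A F fpsC fpsC_is_monoid_morphism.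

End FPSTheory.

Section Truncation.
Variables (A : comUnitRingType) (n : nat).
Local Notation F := (fps A n).
Implicit Types (f g u : F) (m : mono n).

Definition eqm m f g := forall a, mle a m -> f a = g a.

Lemma eqm_refl m f : eqm m f f.
Proof. by []. Qed.

Lemma eqm_sym m f g : eqm m f g -> eqm m g f.
Proof. by move=> fg a am; rewrite fg. Qed.

Lemma eqm_trans m f g u : eqm m f g -> eqm m g u -> eqm m f u.
Proof. by move=> fg gu a am; rewrite fg ?gu. Qed.

Lemma eqmM m f g f' g' : eqm m f f' -> eqm m g g' -> eqm m (f * g) (f' * g').
Proof.
move=> ff' gg' a am; rewrite !fmulE; apply: eq_big_seq => b; rewrite mem_mdivisors => ba.
by rewrite ff' ?gg' ?(mle_trans ba am) ?(mle_trans (mle_subl _ _) am).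
Qed.

Lemma eqm_sum m (I : eqType) (s : seq I) (G G' : I -> F) :
  (forall i, i \in s -> eqm m (G i) (G' i)) ->
  eqm m (\sum_(i <- s) G i) (\sum_(i <- s) G' i).
Proof. by move=> GG' a am; rewrite !fsumE; apply: eq_big_seq => i si; apply: GG'. Qed.

Lemma fexp_coef_eq0 u q a : u (mono0 n) = 0 -> (mdeg a < q)%N -> (u ^+ q) a = 0.
Proof.
move=> u0; elim: q a => // q IH a lt_aq; rewrite exprS fmulE big1_seq // => b /andP[_].
rewrite mem_mdivisors => ba; have [->|b_neq0] := eqVneq b (mono0 n); first by rewrite u0 mul0r.
rewrite IH ?mulr0 // mdegB //; move: b_neq0 (leq_mdeg ba); rewrite -mdeg_eq0; lia.
Qed.

Lemma eqm_exp0 u m q : u (mono0 n) = 0 -> (mdeg m < q)%N -> eqm m (u ^+ q) 0.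
Proof. by move=> u0 lt_mq a am; rewrite fexp_coef_eq0 // (leq_ltn_trans (leq_mdeg am)). Qed.

End Truncation.
Arguments eqm_refl {A n} m f.

Section IntegerPowers.
Variables (A : comUnitRingType) (n : nat).
Local Notation F := (fps A n).
Implicit Types (f g u : F) (m : mono n).

(* [fps_inv f] is the geometric series of [1 - f], truncated at the degree of
   the coefficient; beyond that degree the powers of [1 - f] vanish. *)
Lemma fps_mulV f : f (mono0 n) = 1 -> fps_inv f * f = 1.
Proof.
move=> f0; apply: funext => m; set u : F := 1 - f.
have u0 : u (mono0 n) = 0 by rewrite /u fsubE foneE eqxx f0 subrr.
pose S := \sum_(q < (mdeg m).+1) u ^+ q.
have inv_geom : eqm m (fps_inv f) S.
  move=> a am; rewrite /fps_inv /S fsumE.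
  under eq_bigr do rewrite fps_powE.
  rewrite -!(big_mkord xpredT (fun q => (u ^+ q) a)).
  rewrite (big_cat_nat (leq0n _) (_ : (mdeg a).+1 <= (mdeg m).+1)%N) ?ltnS ?leq_mdeg //=.
  rewrite [X in _ + X]big1_seq ?addr0 // => q.
  by rewrite mem_index_iota => /andP[_ /andP[+ _]]; apply: fexp_coef_eq0.
have geom : S * f = 1 - u ^+ (mdeg m).+1.
  have -> : f = 1 - u by rewrite opprB addrC subrK.
  rewrite -[in RHS](expr1n F (mdeg m).+1) subrXX [LHS]mulrC; congr (_ * _).
  by apply: eq_bigr => q _; rewrite expr1n mul1r.
rewrite (eqmM inv_geom (eqm_refl m f) (mle_refl m)) geom fsubE.
by rewrite (eqm_exp0 u0 (ltnSn _) (mle_refl m)) subr0.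
Qed.

Lemma fps_powz_nat f p : fps_powz f p%:Z = f ^+ p.
Proof. exact: fps_powE. Qed.

Lemma fps_powz_Negz f q : fps_powz f (Negz q) = fps_inv f ^+ q.+1.
Proof. exact: fps_powE. Qed.

Section Powz.
Variable f : F.
Hypothesis f0 : f (mono0 n) = 1.

Lemma fps_powzS e : fps_powz f (e + 1) = f * fps_powz f e.
Proof.
case: e => [p|[|q]].
- have -> : p%:Z + 1 = p.+1%:Z by rewrite -addn1 PoszD.
  by rewrite !fps_powz_nat exprS.
- by rewrite fps_powz_nat fps_powz_Negz expr1 expr0 mulrC fps_mulV.
rewrite (_ : Negz q.+1 + 1 = Negz q); last by rewrite !NegzE; lia.
by rewrite !fps_powz_Negz [in RHS]exprS mulrA (mulrC f) fps_mulV // mul1r.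
Qed.

Lemma fps_powz_addn e p : fps_powz f (e + p%:Z) = fps_powz f e * f ^+ p.
Proof.
elim: p => [|p IH]; first by rewrite addr0 expr0 mulr1.
have -> : p.+1%:Z = p%:Z + 1 by rewrite -addn1 PoszD.
by rewrite addrA fps_powzS IH exprS mulrCA.
Qed.

Lemma fps_powzD a b : fps_powz f (a + b) = fps_powz f a * fps_powz f b.
Proof.
case: b => [p|q]; first by rewrite fps_powz_addn fps_powz_nat.
have {2}-> : a = (a + Negz q) + q.+1%:Z by rewrite NegzE; lia.
rewrite fps_powz_addn fps_powz_Negz -mulrA -exprMn (mulrC f) fps_mulV //.
by rewrite expr1n mulr1.
Qed.

Lemma fps_powzMn e d : fps_powz f (e * d%:Z) = fps_powz f e ^+ d.
Proof.
elim: d => [|d IH]; first by rewrite mulr0 expr0.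
by rewrite -addn1 PoszD mulrDr mulr1 fps_powzD IH exprD expr1.
Qed.

End Powz.
End IntegerPowers.

Lemma prod_subz_ffact (p m : nat) : \prod_(q < m) (p%:Z - q%:Z) = (p ^_ m)%N%:Z.
Proof.
elim: m => [|m IH]; first by rewrite big_ord0 ffactn0.
rewrite big_ord_recr /= IH ffactnSr PoszM.
by case: (leqP m p) => [le_mp|lt_pm]; [rewrite subzn | rewrite ffact_small // mul0r].
Qed.

Lemma prod_Negz_subz (q m : nat) :
  \prod_(j < m) (Negz q - j%:Z) = (-1) ^+ m * ((q + m) ^_ m)%N%:Z.
Proof.
elim: m => [|m IH]; first by rewrite big_ord0 addn0 ffactn0 expr0 mulr1.
rewrite big_ord_recr /= IH addnS ffactSS PoszM NegzE exprS.
have -> : - (q.+1)%:Z - m%:Z = -1 * (q + m).+1%:Z by lia.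
ring.
Qed.

Lemma gbinom_nat (p m : nat) : gbinom p%:Z m = 'C(p, m)%:Z.
Proof. by rewrite /gbinom prod_subz_ffact -bin_ffact PoszM mulzK // eqz_nat -lt0n fact_gt0. Qed.

Lemma gbinom_Negz (q m : nat) : gbinom (Negz q) m = (-1) ^+ m * 'C(q + m, m)%:Z.
Proof.
rewrite /gbinom prod_Negz_subz -bin_ffact PoszM mulrA mulzK //.
by rewrite eqz_nat -lt0n fact_gt0.
Qed.

Lemma gbinom0 h : gbinom h 0 = 1.
Proof. by rewrite /gbinom big_ord0 divz1. Qed.

Lemma gbinomS h m : gbinom (h + 1) m.+1 = gbinom h m.+1 + gbinom h m.
Proof.
case: h => [p|[|q]].
- have -> : p%:Z + 1 = p.+1%:Z by rewrite -addn1 PoszD.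
  by rewrite !gbinom_nat binS PoszD.
- rewrite (_ : Negz 0 + 1 = 0%:Z) // gbinom_nat !gbinom_Negz bin_small // !add0n !binn.
  by rewrite exprS; ring.
rewrite (_ : Negz q.+1 + 1 = Negz q); last by rewrite !NegzE; lia.
by rewrite !gbinom_Negz !addnS !addSn [in RHS]binS PoszD exprS; ring.
Qed.

Lemma dvdn_prod_fact_sumn (t : seq nat) : (\prod_(q <- t) q`! %| (sumn t)`!)%N.
Proof.
elim: t => [|x t IH]; first by rewrite big_nil.
rewrite big_cons /= -(bin_fact (leq_addr (sumn t) x)) addKn.
by rewrite mulnCA dvdn_mul // dvdn_mull.
Qed.

Lemma multinom_nil n0 : multinom n0 [::] = (n0 == 0)%N.
Proof. by case: n0 => [|n0]; rewrite /multinom /= ?big_nil. Qed.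

Lemma multinom_cons n0 x t :
  multinom n0 (x :: t) = if (x <= n0)%N then ('C(n0, x) * multinom (n0 - x) t)%N else 0%N.
Proof.
rewrite /multinom /= big_cons; case: leqP => [le_xn0|lt_n0x]; last first.
  by rewrite ifF //; apply/negbTE; lia.
have -> : (n0 == x + sumn t) = (n0 - x == sumn t)%N by apply/eqP/eqP; lia.
case: eqP => [e|_]; last by rewrite muln0.
have [Q eQ] := dvdnP (dvdn_prod_fact_sumn t).
have prod_gt0 : (0 < \prod_(q <- t) q`!)%N by rewrite prodn_gt0 // => q; rewrite fact_gt0.
rewrite -(bin_fact le_xn0) e eQ mulnK //.
rewrite (_ : _ * (x`! * (Q * _)) = 'C(n0, x) * Q * (x`! * \prod_(q <- t) q`!))%N; last by ring.
by rewrite mulnK // muln_gt0 fact_gt0.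
Qed.

Fixpoint tuples (l N : nat) : seq (seq nat) :=
  if l is l'.+1 then [seq x :: t | x <- iota 0 N.+1, t <- tuples l' N] else [:: [::]].

Lemma tuplesS l N : tuples l.+1 N = [seq x :: t | x <- iota 0 N.+1, t <- tuples l N].
Proof. by []. Qed.

Lemma tuples_uniq l N : uniq (tuples l N).
Proof.
elim: l => [|l IH] //; apply: allpairs_uniq => //; first exact: iota_uniq.
by move=> [x t] [x' t'] _ _ /= [-> ->].
Qed.

Lemma mem_tuples l N t : (t \in tuples l N) = (size t == l) && all (fun x => x <= N)%N t.
Proof.
elim: l t => [|l IH] [|x t] //; rewrite [RHS]/=.
  by apply/negbTE/allpairsP => -[[y u] []].
apply/allpairsP/idP => [[[y u] [+ + [-> ->]]]|].
  by rewrite mem_iota IH ltnS /= eqSS => -> /andP[-> ->].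
rewrite eqSS => /andP[st /andP[xN tN]]; exists (x, t).
by rewrite mem_iota ltnS IH st tN.
Qed.

Lemma multinomial_exprn (R : comPzRingType) (a : nat -> R) r lo N n0 : (n0 <= N)%N ->
  (\sum_(lo <= s < lo + r) a s) ^+ n0 =
  \sum_(t <- tuples r N) (multinom n0 t)%:R * \prod_(lo <= s < lo + r) a s ^+ nth 0%N t (s - lo).
Proof.
elim: r lo n0 => [|r IH] lo n0 le_n0N.
  rewrite addn0 big_geq // expr0n /= big_seq1 big_geq // mulr1 multinom_nil.
  by case: eqP.
rewrite tuplesS (@big_allpairs_dep _ _ _ _ (fun=> seq nat) _ cons).
rewrite big_ltn ?addnS ?ltnS ?leq_addr // -addSn addrC exprDn.
rewrite -(big_mkord xpredT (fun j => (_ ^+ (n0 - j) * a lo ^+ j) *+ 'C(n0, j))).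
rewrite -/(index_iota 0 N.+1) (big_cat_nat (leq0n n0.+1) (_ : n0.+1 <= N.+1)%N) //=.
rewrite [X in _ = _ + X]big1_seq ?addr0; last first.
  move=> y; rewrite mem_index_iota => /andP[_ /andP[lt_n0y _]].
  by rewrite big1 // => t _; rewrite multinom_cons leqNgt lt_n0y mul0r.
apply: eq_big_nat => y /andP[_]; rewrite ltnS => le_yn0.
rewrite IH ?(leq_trans (leq_subr _ _)) // mulr_suml -sumrMnl; apply: eq_bigr => t _.
rewrite multinom_cons le_yn0 [in RHS]big_ltn ?ltn_addr // subnn /=.
rewrite [in RHS](eq_big_nat _ _ (F2 := fun s => a s ^+ nth 0%N t (s - lo.+1))); last first.
  by move=> s /andP[lt_los _]; congr (_ ^+ _); rewrite (_ : (s - lo = (s - lo.+1).+1)%N) //; lia.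
by rewrite -(mulr_natl _ 'C(n0, y)) natrM; ring.
Qed.

Section BinomialSeries.
Variables (A : comUnitRingType) (n : nat).
Local Notation F := (fps A n).
Variables (U : F) (m : mono n) (N : nat).
Hypothesis U0 : U (mono0 n) = 0.
Hypothesis le_mN : (mdeg m <= N)%N.

Definition binser (h : int) : F := \sum_(0 <= k < N.+1) (gbinom h k)%:~R * U ^+ k.

Lemma binser0 : binser 0 = 1.
Proof.
rewrite /binser big_nat_recl // gbinom0 mul1r expr0 big1 ?addr0 // => k _.
by rewrite gbinom_nat bin_small // mul0r.
Qed.

(* Pascal's rule, up to the term of degree [N + 1], which vanishes below [m]. *)
Lemma binser_step h : eqm m ((1 + U) * binser h) (binser (h + 1)).
Proof.
have -> : (1 + U) * binser h = binser (h + 1) + (gbinom h N)%:~R * U ^+ N.+1.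
  rewrite mulrDl mul1r /binser mulr_sumr [X in X + _ = _]big_nat_recl //.
  rewrite [X in _ + X = _]big_nat_recr // [X in _ = X + _]big_nat_recl //= !gbinom0.
  rewrite -!addrA; congr (_ + _); rewrite addrA -big_split /= mulrCA -exprS; congr (_ + _).
  by apply: eq_bigr => k _; rewrite gbinomS intrD mulrDl mulrCA -exprS.
move=> a am; rewrite faddE [in X in _ + X]mulrC fmulE big1_seq ?addr0 // => b /andP[_].
rewrite mem_mdivisors => ba; rewrite fexp_coef_eq0 ?mul0r // ltnS.
exact: leq_trans (leq_mdeg (mle_trans ba am)) le_mN.
Qed.

Lemma fps_powz_binser h : eqm m (fps_powz (1 + U) h) (binser h).
Proof.
have L0 : (1 + U) (mono0 n) = 1 by rewrite faddE U0 addr0 foneE eqxx.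
case: h => [p|q].
  elim: p => [|p IH]; first by rewrite binser0.
  have -> : p.+1%:Z = p%:Z + 1 by rewrite -addn1 PoszD.
  rewrite fps_powzS //; apply: eqm_trans (binser_step _).
  exact: eqmM.
have down h : eqm m (fps_powz (1 + U) (h + 1)) (binser (h + 1)) ->
    eqm m (fps_powz (1 + U) h) (binser h).
  move=> IH; have cancel_1U (f : F) : f = fps_inv (1 + U) * ((1 + U) * f).
    by rewrite mulrA fps_mulV // mul1r.
  rewrite [fps_powz _ h]cancel_1U [binser h]cancel_1U -fps_powzS //; apply: eqmM => //.
  exact: eqm_trans IH (eqm_sym (binser_step h)).
elim: q => [|q IH]; first by apply: down; rewrite binser0.
by apply: down; rewrite (_ : Negz q.+1 + 1 = Negz q) // !NegzE; lia.
Qed.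

End BinomialSeries.

Section MonomialSeries.
Variables (A : comUnitRingType) (n : nat) (B : 'M[int]_n) (x : 'I_n -> A).
Hypothesis x_unit : forall a, x a \is a GRing.unit.
Local Notation F := (fps A n).
Local Notation Y a := (yhat B x a : F).

Definition yhat_coef (a : mono n) : A :=
  \prod_(q : 'I_n) x q ^ (\sum_(p : 'I_n) B q p * (a p)%:Z).

Lemma yhatE a m : Y a m = if m == a then yhat_coef a else 0.
Proof. by []. Qed.

Lemma yhat_coefD a b : yhat_coef (madd a b) = yhat_coef a * yhat_coef b.
Proof.
rewrite /yhat_coef -big_split /=; apply: eq_bigr => q _.
rewrite -exprzDr // -big_split /=; congr (_ ^ _); apply: eq_bigr => p _.
by rewrite ffunE PoszD mulrDr.
Qed.

Lemma yhatM a b : Y a * Y b = Y (madd a b).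
Proof.
apply: funext => m; rewrite fmulE.
rewrite (eq_bigr (fun c => if c == a then yhat_coef a * Y b (msub m a) else 0)); last first.
  by move=> c _; rewrite yhatE; case: eqP => [->|]; rewrite ?mul0r.
rewrite sum_mdivisors_delta !yhatE; have [->|m_neq] := eqVneq m (madd a b).
  by rewrite mle_addr maddKr eqxx yhat_coefD.
case: ifP => // am; case: eqP => [e|]; last by rewrite mulr0.
by case/eqP: m_neq; rewrite -e msubKr.
Qed.

Lemma yhat0 : Y (mono0 n) = 1.
Proof.
apply: funext => m; rewrite yhatE foneE; case: eqP => // _.
by rewrite /yhat_coef big1 // => q _; rewrite big1 ?expr0z // => p _; rewrite ffunE mulr0.
Qed.

Lemma yhatX a d : Y a ^+ d = Y (mscale d a).
Proof.
elim: d => [|d IH].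
  by rewrite expr0 -yhat0; congr yhat; apply/ffunP => q; rewrite !ffunE.
by rewrite exprS IH yhatM; congr yhat; apply/ffunP => q; rewrite !ffunE mulSn.
Qed.

Lemma yhat_mono0 a : a != mono0 n -> Y a (mono0 n) = 0.
Proof. by move=> a_neq0; rewrite yhatE eq_sym (negbTE a_neq0). Qed.

End MonomialSeries.

Section PathSeries.
Variables (A : comUnitRingType) (n : nat) (r : 'I_n -> nat) (B : 'M[int]_n)
  (D0 : 'I_n -> int) (x : 'I_n -> A) (z : 'I_n -> nat -> A) (i : nat -> 'I_n).
Hypothesis z0 : forall a, z a 0%N = 1.
Local Notation F := (fps A n).
Local Notation L j := (Lser r B D0 x z i j : F).
Local Notation Y a := (yhat B x a : F).
Local Notation cpm j := (cplus_mono r B i j).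
Local Notation pr l j := (pairing r B D0 i l j).

Lemma size_Lseq j : size (Lseq r B D0 x z i j) = j.
Proof. by elim: j => // j IH; rewrite /= size_rcons IH. Qed.

Lemma nth_Lseq j l : (1 <= l <= j)%N -> nth (@fps_zero A n) (Lseq r B D0 x z i j) l.-1 = L l.
Proof.
case/andP=> l_gt0; elim: j => [|j IH]; first by case: l l_gt0.
rewrite leq_eqVlt => /orP[/eqP <- //|]; rewrite ltnS => le_lj.
by rewrite /= nth_rcons size_Lseq ifT ?IH //; lia.
Qed.

(* [L j] is the polynomial [\sum_s z_s X^s] evaluated at [X = Lbase j]. *)
Definition Lbase j : F := Y (cpm j) * \prod_(1 <= l < j) fps_powz (L l) (- pr j l).

Definition Ltail j : F := \sum_(1 <= s < (r (i j)).+1) fpsC (z (i j) s) * Lbase j ^+ s.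

Lemma Lser_Ltail j : (1 <= j)%N -> L j = 1 + Ltail j.
Proof.
case: j => // j _; rewrite /Lser /= nth_rcons size_Lseq ltnn eqxx /Lnext.
rewrite fps_bigaddE big_ord_recl /Ltail [in RHS]big_add1 [in RHS]big_mkord; congr (_ + _).
  by rewrite z0 fps_scaleE rmorph1 mul1r fps_powE expr0.
apply: eq_bigr => s _; rewrite fps_scaleE fps_powE lift0; congr (_ * (_ * _) ^+ _).
rewrite fps_bigmulE; apply: eq_big_nat => l /andP[l_gt0 lt_lj].
by rewrite /fps_powz nth_Lseq //; lia.
Qed.

Lemma Ltail_mono0 j : cpm j != mono0 n -> Ltail j (mono0 n) = 0.
Proof.
move=> cpm_neq0; have Lbase0 : Lbase j (mono0 n) = 0 by rewrite /Lbase fmul_mono0 yhat_mono0 ?mul0r.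
rewrite /Ltail fsumE big1_seq // => s /andP[_]; rewrite mem_index_iota => /andP[s_gt0 _].
by rewrite fpsCE fexp_coef_eq0 ?mulr0 // mdeg0.
Qed.

Variable N : nat.

(* A tuple [t] records [n^j_0, n^j_1, ..., n^j_r] for a single index [j]. *)
Definition tdeg j (t : seq nat) : nat := (\sum_(1 <= s < (r (i j)).+1) s * nth 0%N t s)%N.

Definition tcoef j (hh : int) (t : seq nat) : A :=
  (bracecoef hh (nth 0%N t 0) [seq nth 0%N t s | s <- iota 1 (r (i j))])%:~R
  * \prod_(1 <= s < (r (i j)).+1) z (i j) s ^+ nth 0%N t s.

Lemma binser_Ltail j hh :
  binser (Ltail j) N hh =
  \sum_(t <- tuples (r (i j)).+1 N) fpsC (tcoef j hh t) * Lbase j ^+ tdeg j t.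
Proof.
rewrite /binser tuplesS (@big_allpairs_dep _ _ _ _ (fun=> seq nat) _ cons).
rewrite -/(index_iota 0 N.+1); apply: eq_big_nat => y /andP[_]; rewrite ltnS => le_yN.
rewrite /Ltail -[(r (i j)).+1]/(1 + r (i j))%N (multinomial_exprn _ _ _ le_yN) mulr_sumr.
apply: eq_big_seq => t; rewrite mem_tuples => /andP[/eqP size_t _].
rewrite /tcoef /tdeg /bracecoef /=.
have -> : [seq nth 0%N (y :: t) s | s <- iota 1 (r (i j))] = t.
  by rewrite -[RHS](mkseq_nth 0%N t) size_t /mkseq -add1n iotaDl -map_comp.
rewrite add1n (eq_big_nat _ _
    (F2 := fun s => (fpsC (z (i j) s) * Lbase j ^+ s) ^+ nth 0%N (y :: t) s));
  last by move=> [|s] //; rewrite subSS subn0.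
under eq_bigr do rewrite exprMn -exprM -rmorphXn.
rewrite big_split /= prodrXr rmorphM rmorph_int intrM rmorph_prod.
by rewrite !mulrA.
Qed.

Variable k : nat.
Hypothesis x_unit : forall a, x a \is a GRing.unit.
Hypothesis cpm_neq0 : forall j, (1 <= j <= k)%N -> cpm j != mono0 n.

Lemma Lser_mono0 j : (1 <= j <= k)%N -> L j (mono0 n) = 1.
Proof.
move=> jk; have /andP[j_gt0 _] := jk.
by rewrite Lser_Ltail // faddE foneE eqxx Ltail_mono0 ?addr0 ?cpm_neq0.
Qed.

Lemma Lbase_exp j d : (1 <= j <= k)%N ->
  Lbase j ^+ d = Y (mscale d (cpm j)) * \prod_(1 <= l < j) fps_powz (L l) (- pr j l * d%:Z).
Proof.
move=> jk; rewrite exprMn yhatX // -prodrXl; congr (_ * _).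
by apply: eq_big_nat => l lj; rewrite fps_powzMn // Lser_mono0 //; lia.
Qed.

Lemma fps_powz_Lser_expand j hh m : (1 <= j <= k)%N -> (mdeg m <= N)%N ->
  eqm m (fps_powz (L j) hh)
    (\sum_(t <- tuples (r (i j)).+1 N) fpsC (tcoef j hh t) *
       (Y (mscale (tdeg j t) (cpm j)) *
        \prod_(1 <= l < j) fps_powz (L l) (- pr j l * (tdeg j t)%:Z))).
Proof.
move=> jk le_mN; have /andP[j_gt0 _] := jk.
rewrite Lser_Ltail //; apply: eqm_trans (fps_powz_binser (Ltail_mono0 (cpm_neq0 jk)) le_mN hh) _.
by rewrite binser_Ltail => a _; under eq_bigr do rewrite Lbase_exp //.
Qed.

Local Notation rhs_term k h := (rhs_term r B D0 x z i k h).
Local Notation jfactor k h := (jfactor r B D0 z i k h).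
Local Notation upper k h := (upper r B D0 i k h).
Local Notation sdeg := (sdeg r i).
Local Notation nu_shape k := (nu_shape r i k).
Local Notation rhs_exp k := (rhs_exp r B i k).

Lemma nu_shape_rcons k' nu t :
  nu_shape k'.+1 (rcons nu t) = nu_shape k' nu && (size t == (r (i k'.+1)).+1).
Proof.
rewrite /Defs.nu_shape size_rcons eqSS; have [size_nu|] //= := eqVneq (size nu) k'.
apply/forallP/andP=> [shape|[/forallP shape size_t] j].
  split; last by move: (shape ord_max); rewrite /= nth_rcons size_nu ltnn eqxx.
  apply/forallP=> j; move: (shape (widen_ord (leqnSn _) j)).
  by rewrite /= nth_rcons size_nu ltn_ord.
rewrite nth_rcons size_nu; case: ltnP => [lt_jk|le_kj]; first exact: (shape (Ordinal lt_jk)).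
by rewrite (_ : nat_of_ord j = k') ?eqxx //; move: (ltn_ord j); lia.
Qed.

Lemma upper_last k' h nu : upper k' h nu k' = h k'.
Proof. by rewrite /Defs.upper big_geq // addr0. Qed.

Section Rcons.
Variables (k' : nat) (nu : seq (seq nat)) (t : seq nat).
Hypothesis size_nu : size nu = k'.

(* The exponent shift of [L_1, ..., L_k'] produced by [Lbase k'.+1 ^+ tdeg k'.+1 t]. *)
Definition hshift (h : nat -> int) (l : nat) : int := h l + (tdeg k'.+1 t)%:Z * - pr k'.+1 l.

Lemma nuc_rcons l s : (1 <= l <= k')%N -> nuc (rcons nu t) l s = nuc nu l s.
Proof. by case/andP=> l_gt0 le_lk; rewrite /nuc nth_rcons size_nu ifT //; lia. Qed.

Lemma nuc_rcons_last s : nuc (rcons nu t) k'.+1 s = nth 0%N t s.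
Proof. by rewrite /nuc nth_rcons size_nu /= ltnn eqxx. Qed.

Lemma sdeg_rcons l : (1 <= l <= k')%N -> sdeg (rcons nu t) l = sdeg nu l.
Proof. by move=> lk; apply: eq_bigr => s _; rewrite nuc_rcons. Qed.

Lemma sdeg_rcons_last : sdeg (rcons nu t) k'.+1 = tdeg k'.+1 t.
Proof. by apply: eq_bigr => s _; rewrite nuc_rcons_last. Qed.

Lemma upper_rcons h l : (1 <= l <= k')%N ->
  upper k'.+1 h (rcons nu t) l = upper k' (hshift h) nu l.
Proof.
case/andP=> l_gt0 le_lk; rewrite /Defs.upper /hshift big_nat_recr /=; last by lia.
rewrite sdeg_rcons_last -!addrA; congr (_ + _); rewrite addrC; congr (_ + _).
by apply: eq_big_nat => l' /andP[lt_ll' lt_l'k]; rewrite sdeg_rcons //; lia.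
Qed.

Lemma jfactor_rcons h l : (1 <= l <= k')%N ->
  jfactor k'.+1 h (rcons nu t) l = jfactor k' (hshift h) nu l.
Proof.
move=> lk; rewrite /Defs.jfactor upper_rcons // nuc_rcons //.
under eq_map do rewrite nuc_rcons //.
by under eq_bigr do rewrite nuc_rcons //.
Qed.

Lemma jfactor_rcons_last h : jfactor k'.+1 h (rcons nu t) k'.+1 = tcoef k'.+1 (h k'.+1) t.
Proof.
rewrite /Defs.jfactor /tcoef upper_last nuc_rcons_last.
under eq_map do rewrite nuc_rcons_last.
by under eq_bigr do rewrite nuc_rcons_last.
Qed.

Lemma rhs_exp_rcons :
  rhs_exp k'.+1 (rcons nu t) = madd (rhs_exp k' nu) (mscale (tdeg k'.+1 t) (cpm k'.+1)).
Proof.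
apply/ffunP=> q; rewrite !ffunE big_nat_recr //= sdeg_rcons_last ffunE; congr (_ + _)%N.
by apply: eq_big_nat => l lk; rewrite sdeg_rcons.
Qed.

Lemma rhs_term_rcons h : nu_shape k' nu -> size t = (r (i k'.+1)).+1 ->
  rhs_term k'.+1 h (rcons nu t) =
  fpsC (tcoef k'.+1 (h k'.+1) t) * Y (mscale (tdeg k'.+1 t) (cpm k'.+1)) *
  rhs_term k' (hshift h) nu.
Proof.
move=> shape_nu size_t; rewrite /Defs.rhs_term nu_shape_rcons shape_nu size_t eqxx /=.
rewrite !fps_scaleE rhs_exp_rcons -yhatM // big_nat_recr //= jfactor_rcons_last rmorphM.
rewrite (eq_big_nat _ _ (F2 := jfactor k' (hshift h) nu)) => [|l lk]; last exact: jfactor_rcons.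
by rewrite mulrACA [LHS]mulrC.
Qed.

End Rcons.

Fixpoint nu_box (k' : nat) : seq (seq (seq nat)) :=
  if k' is k''.+1 then [seq rcons nu t | nu <- nu_box k'', t <- tuples (r (i k''.+1)).+1 N]
  else [:: [::]].

Lemma nu_boxS k' :
  nu_box k'.+1 = [seq rcons nu t | nu <- nu_box k', t <- tuples (r (i k'.+1)).+1 N].
Proof. by []. Qed.

Lemma nu_box_uniq k' : uniq (nu_box k').
Proof.
elim: k' => [|k' IH] //; apply: allpairs_uniq => //; first exact: tuples_uniq.
by move=> [nu t] [nu' t'] _ _ /= /rcons_inj [-> ->].
Qed.

Lemma mem_nu_box k' nu :
  (nu \in nu_box k') = nu_shape k' nu && all (all (fun e => e <= N)%N) nu.
Proof.
elim: k' nu => [|k' IH] nu.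
  by case: nu => [|t nu] //; rewrite /Defs.nu_shape andbT; apply/esym/forallP => -[].
rewrite nu_boxS; apply/allpairsP/idP => [[[nu' t] [+ + ->]]|].
  by rewrite IH mem_tuples nu_shape_rcons all_rcons => /andP[-> ->] /andP[-> ->].
case/lastP: nu => [|nu t]; first by rewrite /Defs.nu_shape.
rewrite nu_shape_rcons all_rcons => /andP[/andP[shape_nu size_t] /andP[t_le nu_le]].
by exists (nu, t); rewrite IH mem_tuples shape_nu size_t t_le nu_le.
Qed.

Local Notation lhs k h := (lhs r B D0 x z i k h : F).

Lemma lhsS k' h : lhs k'.+1 h = lhs k' h * fps_powz (L k'.+1) (h k'.+1).
Proof. by rewrite /Defs.lhs fps_bigmulE big_nat_recr. Qed.

Lemma lhs_hshift k' t h : (k' < k)%N ->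
  lhs k' h * \prod_(1 <= l < k'.+1) fps_powz (L l) (- pr k'.+1 l * (tdeg k'.+1 t)%:Z) =
  lhs k' (hshift k' t h).
Proof.
move=> lt_k'k; rewrite /Defs.lhs !fps_bigmulE -big_split /=; apply: eq_big_nat => l lk'.
by rewrite -fps_powzD /hshift 1?mulrC // Lser_mono0 //; lia.
Qed.

Lemma lhs_expand m : (mdeg m <= N)%N -> forall k' h, (k' <= k)%N ->
  eqm m (lhs k' h) (\sum_(nu <- nu_box k') (rhs_term k' h nu : F)).
Proof.
move=> le_mN; elim=> [|k' IH] h le_k'k.
  rewrite /Defs.lhs big_geq // big_seq1 /Defs.rhs_term /Defs.nu_shape /= big_geq // fps_scaleE.
  rewrite ifT; last by apply/forallP => -[].
  rewrite rmorph1 mul1r (_ : rhs_exp 0 [::] = mono0 n) ?yhat0 //.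
  by apply/ffunP => q; rewrite !ffunE big_geq.
have jk : (1 <= k'.+1 <= k)%N by [].
rewrite lhsS.
apply: eqm_trans (eqmM (eqm_refl m (lhs k' h)) (fps_powz_Lser_expand (h k'.+1) jk le_mN)) _.
rewrite mulr_sumr nu_boxS (@big_allpairs_dep _ _ _ _ (fun=> seq nat) _ (@rcons _)).
rewrite exchange_big; apply: eqm_sum => t; rewrite mem_tuples => /andP[/eqP size_t _].
have rhs_rcons nu : nu \in nu_box k' -> rhs_term k'.+1 h (rcons nu t) =
    fpsC (tcoef k'.+1 (h k'.+1) t) * Y (mscale (tdeg k'.+1 t) (cpm k'.+1)) *
    rhs_term k' (hshift k' t h) nu.
  rewrite mem_nu_box => /andP[shape_nu _]; rewrite rhs_term_rcons //.
  by case/andP: shape_nu => /eqP.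
rewrite (eq_big_seq _ rhs_rcons) -mulr_sumr mulrCA [X in _ * X]mulrCA mulrA lhs_hshift //.
exact: eqmM (eqm_refl m _) (IH _ (ltnW le_k'k)).
Qed.

Lemma leq_sdeg_mdeg nu j : (1 <= j <= k)%N -> (sdeg nu j <= mdeg (rhs_exp k nu))%N.
Proof.
move=> jk; have cpm_gt0 : (0 < mdeg (cpm j))%N by rewrite lt0n mdeg_eq0 cpm_neq0.
apply: leq_trans (leq_pmulr _ cpm_gt0) _; rewrite /mdeg big_distrr; apply: leq_sum => q _.
by rewrite [X in (_ <= X)%N]ffunE (bigD1_seq j) ?mem_index_iota ?iota_uniq //= leq_addr.
Qed.

(* For [s = 0], [n^j_0 > N >= sum_s s n^j_s] forces [n^j_0 <> sum_s n^j_s],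
   so that the multinomial coefficient in [jfactor] vanishes. *)
Lemma sdeg_gt_or_jfactor0 h nu j s : (s <= r (i j))%N -> (N < nuc nu j s)%N ->
  (N < sdeg nu j)%N \/ jfactor k h nu j = 0.
Proof.
case: s => [_|s le_sr] lt_N; last first.
  left; apply: leq_trans lt_N (leq_trans (leq_pmull _ (ltn0Sn s)) _).
  by rewrite /Defs.sdeg (bigD1_seq s.+1) ?mem_index_iota ?iota_uniq //= leq_addr.
rewrite /Defs.jfactor /bracecoef /multinom; case: eqP => [sum_n0|_]; last first.
  by right; rewrite mulr0 mul0r.
left; apply: leq_trans lt_N _; rewrite sum_n0 sumnE big_map /Defs.sdeg.
rewrite (_ : iota 1 _ = index_iota 1 (r (i j)).+1); last by rewrite /index_iota subn1.
by rewrite !big_seq; apply: leq_sum => s; rewrite mem_index_iota => /andP[/leq_pmull].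
Qed.

Lemma rhs_term_out_box h nu m : (mdeg m <= N)%N -> nu_shape k nu ->
  ~~ all (all (fun e => e <= N)%N) nu -> (rhs_term k h nu : F) m = 0.
Proof.
move=> le_mN shape_nu /allPn[l l_nu /allPn[e e_l]]; rewrite -ltnNge => lt_Ne.
have /andP[/eqP size_nu /forallP size_nuc] := shape_nu.
have lt_jk : (index l nu < k)%N by rewrite -size_nu index_mem.
have jk : (1 <= (index l nu).+1 <= k)%N by [].
have := size_nuc (Ordinal lt_jk); rewrite /= nth_index // => /eqP size_l.
have := @sdeg_gt_or_jfactor0 h nu (index l nu).+1 (index e l).
rewrite /nuc /= !nth_index // -ltnS -size_l index_mem => /(_ e_l lt_Ne) [lt_N|jfactor0].
  rewrite /Defs.rhs_term shape_nu fps_scaleE fpsCE yhatE.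
  case: eqP => [m_eq|]; last by rewrite mulr0.
  by move: (leq_sdeg_mdeg nu jk); rewrite -m_eq; lia.
rewrite /Defs.rhs_term shape_nu fps_scaleE fpsCE.
rewrite (bigD1_seq (index l nu).+1) ?mem_index_iota ?iota_uniq //=.
by rewrite jfactor0 !mul0r.
Qed.

End PathSeries.

Lemma cplus_mono_neq0 (n : nat) (r : 'I_n -> nat) (B : 'M[int]_n) (i : nat -> 'I_n) j :
  (exists a, cvec r B i j a != 0) -> cplus_mono r B i j != mono0 n.
Proof.
move=> [a cvec_neq0]; apply/eqP => /ffunP /(_ a); rewrite !ffunE /cplus => /eqP.
by rewrite abszM muln_eq0 !absz_eq0 (negbTE cvec_neq0) orbF /csign; case: ifP.
Qed.

Theorem lemmaL4
  (A : comUnitRingType) (n : nat) (r : 'I_n -> nat) (B : 'M[int]_n)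
  (D0 : 'I_n -> int) (x : 'I_n -> A) (z : 'I_n -> nat -> A)
  (k : nat) (i : nat -> 'I_n) (h : nat -> int) :
  (0 < n)%N ->
  (forall a, (0 < r a)%N) ->
  (forall a, 0 < D0 a) ->
  (forall a b, D0 a * (r a)%:Z * B a b = - (D0 b * (r b)%:Z * B b a)) ->
  (forall a, x a \is a GRing.unit) ->
  (forall a, z a 0%N = 1) ->
  (forall a, z a (r a) = 1) ->
  (forall a s, (s <= r a)%N -> z a s = z a (r a - s)%N) ->
  (forall j, (1 <= j < k)%N -> i j != i j.+1) ->
  (forall j, (1 <= j <= k)%N ->
     (exists a, cvec r B i j a != 0) /\
     ((forall a, 0 <= cvec r B i j a) \/ (forall a, cvec r B i j a <= 0))) ->
  fps_hasSum (rhs_term r B D0 x z i k h) (lhs r B D0 x z i k h).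
Proof.
move=> _ _ _ _ x_unit z0 _ _ _ c_sign_coherent m.
have cpm_neq0 j : (1 <= j <= k)%N -> cplus_mono r B i j != mono0 n.
  by move=> jk; apply: cplus_mono_neq0; case: (c_sign_coherent j jk).
exists (nu_box r i (mdeg m) k); split; first exact: nu_box_uniq.
  move=> nu; rewrite mem_nu_box negb_and; have [shape_nu|] := boolP (nu_shape r i k nu).
    exact: rhs_term_out_box.
  by rewrite /Defs.rhs_term => /negbTE ->.
by rewrite (lhs_expand D0 z0 x_unit cpm_neq0 (leqnn _) h (leqnn k) (mle_refl m)) fsumE.
Qed.
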